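(* For every $n\ge 3$, the wheel $W_n$ is H$_2$--cordial.
   Context: The wheel $W_n$ has vertex set $\{v_0,v_1,\dots,v_n\}$ and edges $v_0v_i$ for $1\le i\le n$ together with the cycle edges $v_iv_{i+1}$ for $1\le i\le n$ (with $v_{n+1}=v_1$). For a positive integer $k$, an H$_k$--cordial labeling of a graph $G$ is a map $f:E(G)\to\mathbb{Z}$ such that, defining $f(v)=\sum_{e\in I(v)} f(e)$ for each vertex $v$ (where $I(v)$ is the set of edges incident to $v$), we have $1\le |f(e)|\le k$ for every edge $e$, $1\le |f(v)|\le k$ for every vertex $v$, and for each $i$ with $1\le i\le k$, $|e_f(i)-e_f(-i)|\le 1$ and $|v_f(i)-v_f(-i)|\le 1$; here $e_f(c)$ is the number of edges with label $c$ and $v_f(c)$ the number of vertices $v$ with $f(v)=c$. A graph is H$_k$--cordial if it admits an H$_k$--cordial labeling. *)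

From mathcomp Require Import all_boot all_order all_algebra.
Set Implicit Arguments. Unset Strict Implicit. Unset Printing Implicit Defensive.
Import Order.TTheory GRing.Theory Num.Theory.
Local Open Scope ring_scope.

Section Cordial.
Variables (V E : finType) (ends : E -> V * V).

Definition incident (v : V) (e : E) : bool := ((ends e).1 == v) || ((ends e).2 == v).

Definition vlabel (f : E -> int) (v : V) : int := \sum_(e : E | incident v e) f e.

Definition e_count (f : E -> int) (c : int) : nat := #|[set e : E | f e == c]|.
Definition v_count (f : E -> int) (c : int) : nat := #|[set v : V | vlabel f v == c]|.

Definition Hk_cordial_labeling (k : nat) (f : E -> int) : Prop :=
  (forall e, 1 <= `|f e| <= k%:Z) /\
  (forall v, 1 <= `|vlabel f v| <= k%:Z) /\
  (forall i : nat, (1 <= i <= k)%N ->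
     `|(e_count f i%:Z)%:Z - (e_count f (- i%:Z))%:Z| <= 1 /\
     `|(v_count f i%:Z)%:Z - (v_count f (- i%:Z))%:Z| <= 1).

Definition Hk_cordial (k : nat) : Prop := exists f : E -> int, Hk_cordial_labeling k f.
End Cordial.

(* The wheel W_n: vertices 'I_n.+1, vertex 0 is the hub v_0, vertex j (1<=j<=n) is v_j.
   Edges: inl i (i : 'I_n) is the spoke v_0 v_{i+1};
          inr i (i : 'I_n) is the rim edge v_{i+1} v_{((i+1) mod n)+1}. *)
Definition wheel_ends (n : nat) (e : 'I_n + 'I_n) : 'I_n.+1 * 'I_n.+1 :=
  match e with
  | inl i => (ord0, inord i.+1)
  | inr i => (inord i.+1, inord ((i.+1 %% n).+1))
  end.

Definition wheel_Hk_cordial (n k : nat) : Prop :=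
  Hk_cordial (V := 'I_n.+1) (@wheel_ends n) k.

(* Write n = m + 2k with m = 3 for odd n and m = 4 for even n.  The first m
   spokes and rim edges get explicit labels; the remaining spokes alternate
   2, -2, 2, ... and the remaining rim edges 1, -1, 1, ...  Past the head, the
   two rim labels at a rim vertex cancel, so that vertex inherits the
   alternating label of its spoke; the wrap-around vertex v_1 sees the last rim
   label, which is -1 because the tail has even length.  Every alternating tail
   therefore contributes equally to the counts of i and -i, the hub receives the
   sum 1 or 2 of the head spokes, and cordiality reduces to a finite check on the
   heads. *)

From mathcomp Require Import all_boot all_order all_algebra.
From mathcomp Require Import zify.
Set Implicit Arguments. Unset Strict Implicit. Unset Printing Implicit Defensive.
Import Order.TTheory GRing.Theory Num.Theory.
Local Open Scope ring_scope.

Definition signed_indicator (c x : int) : int := (x == c)%:Z - (x == - c)%:Z.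

Lemma signed_indicatorN c x : signed_indicator c (- x) = - signed_indicator c x.
Proof. by rewrite /signed_indicator eqr_opp eqr_oppLR opprB. Qed.

Lemma card_set_imbalance (T : finType) (f : T -> int) (c : int) :
  (#|[set x | f x == c]|)%:Z - (#|[set x | f x == - c]|)%:Z =
  \sum_x signed_indicator c (f x).
Proof.
rewrite -!sum1_card !(big_morph Posz PoszD (erefl 0%:Z)).
rewrite big_mkcond [X in _ - X]big_mkcond -sumrB /=.
by apply: eq_bigr => x _; rewrite !inE /signed_indicator; do 2 case: eqP.
Qed.

Definition alt_ext (h : seq int) (x : int) (i : nat) : int :=
  if (i < size h)%N then nth 0 h i else if odd (i - size h) then - x else x.

Lemma alt_ext_in (P : pred int) h x i :
  all P h -> P x -> P (- x) -> P (alt_ext h x i).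
Proof.
move=> /allP Ph Px PNx; rewrite /alt_ext; case: ifP => [i_lt|_].
  exact/Ph/mem_nth.
by case: odd.
Qed.

Lemma alt_ext_tail h x t :
  alt_ext h x (size h + t.*2) = x /\ alt_ext h x (size h + t.*2).+1 = - x.
Proof.
by rewrite /alt_ext !ltnNge leq_addr -addnS leq_addr !addKn /= odd_double.
Qed.

Lemma sum_alt_ext (F : int -> int) : (forall y, F (- y) = - F y) ->
  forall h x k, \sum_(i < size h + k.*2) F (alt_ext h x i) = \sum_(y <- h) F y.
Proof.
move=> FN h x k; rewrite -(big_mkord xpredT (fun i => F (alt_ext h x i))).
rewrite (big_cat_nat (leq0n (size h)) (leq_addr _ _)) /=.
have -> : \sum_(size h <= i < size h + k.*2) F (alt_ext h x i) = 0.
  elim: k => [|k IHk]; first by rewrite addn0 big_geq.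
  rewrite doubleS !addnS !big_nat_recr ?leqW ?leq_addr //= IHk add0r.
  by have [-> ->] := alt_ext_tail h x k; rewrite FN subrr.
rewrite addr0 [RHS](big_nth 0); apply: eq_big_nat => i /andP[_ i_lt].
by rewrite /alt_ext i_lt.
Qed.

Lemma alt_ext_cancel h x j :
  last 0 h = - x -> (0 < size h)%N -> (size h <= j)%N ->
  alt_ext h x j + alt_ext h x j.-1 = 0.
Proof.
move=> h_last h_pos; rewrite leq_eqVlt => /predU1P[<-|j_gt].
  by rewrite /alt_ext ltnn subnn ltn_predL h_pos nth_last h_last subrr.
rewrite /alt_ext !ltnNge (ltnW j_gt) -ltnS prednK ?(leq_ltn_trans _ j_gt) //=.
have -> : (j - size h = (j.-1 - size h).+1)%N by lia.
by rewrite /=; case: odd; rewrite /= ?subrr ?addNr.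
Qed.

Lemma alt_ext_last h x k :
  last 0 h = - x -> (0 < size h)%N -> alt_ext h x (size h + k.*2).-1 = - x.
Proof.
move=> h_last h_pos; case: k => [|k].
  by rewrite addn0 /alt_ext ltn_predL h_pos nth_last.
by rewrite doubleS !addnS /=; case: (alt_ext_tail h x k).
Qed.

Definition wheel_labeling (n : nat) (s r : nat -> int) (e : 'I_n + 'I_n) : int :=
  match e with inl i => s i | inr i => r i end.

Definition rim_pred (n j : nat) : nat := if j == 0%N then n.-1 else j.-1.

Lemma succ_modn i n : (i < n)%N -> (i.+1 %% n = if i.+1 == n then 0 else i.+1)%N.
Proof.
move=> i_lt; case: eqP => [->|i_neq]; first by rewrite modnn.
by rewrite modn_small //; lia.
Qed.

Lemma wheel_incident_hub n (e : 'I_n + 'I_n) :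
  incident (@wheel_ends n) ord0 e = if e is inl _ then true else false.
Proof.
case: e => i /=; rewrite /incident /= ?eqxx //.
have i_lt := ltn_ord i; rewrite -!val_eqE /= !inordK ?succ_modn //.
by case: eqP; lia.
Qed.

Lemma wheel_incident_spoke n (i j : 'I_n) :
  incident (@wheel_ends n) (lift ord0 j) (inl i) = (i == j).
Proof.
by have i_lt := ltn_ord i; rewrite /incident /= -!val_eqE /= inordK.
Qed.

Lemma wheel_incident_rim n (i j : 'I_n) :
  incident (@wheel_ends n) (lift ord0 j) (inr i) =
  (i == j) || (val i == rim_pred n j).
Proof.
have i_lt := ltn_ord i; have j_lt := ltn_ord j.
rewrite /incident /= -!val_eqE /= !inordK ?succ_modn //; last by case: eqP; lia.
by rewrite /bump /rim_pred; case: ifP; case: ifP; lia.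
Qed.

Lemma vlabel_wheel_hub n s r :
  vlabel (@wheel_ends n) (wheel_labeling s r) ord0 = \sum_(i < n) s i.
Proof.
rewrite /vlabel big_sumType /= [X in _ + X]big_pred0 ?addr0.
  by apply: eq_bigl => i; rewrite wheel_incident_hub.
by move=> i; rewrite wheel_incident_hub.
Qed.

Lemma vlabel_wheel_rim n s r (j : 'I_n) : (1 < n)%N ->
  vlabel (@wheel_ends n) (wheel_labeling s r) (lift ord0 j) =
  s j + r j + r (rim_pred n j).
Proof.
move=> n_gt1; have j_lt := ltn_ord j.
have pj_lt : (rim_pred n j < n)%N by rewrite /rim_pred; case: ifP; lia.
rewrite /vlabel big_sumType /=.
rewrite (eq_bigl _ _ (fun i => wheel_incident_spoke i j)) big_pred1_eq.
rewrite (eq_bigl _ _ (fun i => wheel_incident_rim i j)) (bigD1 j) ?eqxx //= -addrA.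
rewrite (eq_bigl (fun i : 'I_n => val i == rim_pred n j)) ?big_ord1_eq ?pj_lt // => i.
by rewrite -val_eqE /= /rim_pred; case: ifP; lia.
Qed.

Definition spoke_head (b : bool) : seq int :=
  if b then [:: 1; 1; -1] else [:: 1; 1; 1; -1].
Definition rim_head (b : bool) : seq int :=
  if b then [:: -1; 1; -1] else [:: -2; -1; 1; -1].
Definition vertex_head (b : bool) : seq int :=
  if b then [:: -1; 1; -1] else [:: -2; -2; 1; -1].

Definition spoke_lab b := alt_ext (spoke_head b) 2.
Definition rim_lab b := alt_ext (rim_head b) 1.
Definition vertex_lab b := alt_ext (vertex_head b) 2.

Lemma size_rim_head b : size (rim_head b) = size (spoke_head b).
Proof. by case: b. Qed.

Lemma size_vertex_head b : size (vertex_head b) = size (spoke_head b).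
Proof. by case: b. Qed.

Lemma wheel_size_decomp n : (3 <= n)%N ->
  exists b k, n = (size (spoke_head b) + k.*2)%N.
Proof.
move=> n_ge3; exists (odd n), ((n - size (spoke_head (odd n)))./2).
have := odd_double_half (n - size (spoke_head (odd n))).
by case: (boolP (odd n)) => /= n_odd; rewrite oddB ?n_odd //=; lia.
Qed.

Section Construction.
Variables (b : bool) (k : nat).
Let n := (size (spoke_head b) + k.*2)%N.
Let f : 'I_n + 'I_n -> int := wheel_labeling (spoke_lab b) (rim_lab b).

Lemma rim_vertex_lab (j : 'I_n) :
  spoke_lab b j + rim_lab b j + rim_lab b (rim_pred n j) = vertex_lab b j.
Proof.
rewrite /rim_pred; case: eqP => [-> | j_neq0].
  by rewrite /rim_lab /n -size_rim_head alt_ext_last //; case: (b).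
have [j_lt | j_ge] := ltnP j (size (spoke_head b)).
  case: j j_lt j_neq0 => /= j _; rewrite /spoke_lab /rim_lab /vertex_lab /alt_ext.
  by case: (b); case: j => [|[|[|[|j]]]] // _ [].
have rim_last : last 0 (rim_head b) = -1 by case: (b).
have head_pos : (0 < size (spoke_head b))%N by case: (b).
rewrite -addrA /rim_lab alt_ext_cancel ?size_rim_head // addr0.
by rewrite /spoke_lab /vertex_lab /alt_ext size_vertex_head ltnNge j_ge.
Qed.

Lemma vlabel_rim_vertex (j : 'I_n) :
  vlabel (@wheel_ends n) f (lift ord0 j) = vertex_lab b j.
Proof. by rewrite vlabel_wheel_rim ?rim_vertex_lab // /n; case: (b). Qed.

Lemma vlabel_hub : vlabel (@wheel_ends n) f ord0 = \sum_(y <- spoke_head b) y.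
Proof. by rewrite vlabel_wheel_hub (@sum_alt_ext id (fun y => erefl)). Qed.

Lemma edge_imbalance c :
  (e_count f c)%:Z - (e_count f (- c))%:Z =
  \sum_(y <- spoke_head b) signed_indicator c y +
  \sum_(y <- rim_head b) signed_indicator c y.
Proof.
rewrite card_set_imbalance big_sumType /= (sum_alt_ext (signed_indicatorN c)).
by rewrite /n -size_rim_head (sum_alt_ext (signed_indicatorN c)).
Qed.

Lemma vertex_imbalance c :
  (v_count (@wheel_ends n) f c)%:Z - (v_count (@wheel_ends n) f (- c))%:Z =
  signed_indicator c (\sum_(y <- spoke_head b) y) +
  \sum_(y <- vertex_head b) signed_indicator c y.
Proof.
rewrite card_set_imbalance big_ord_recl vlabel_hub; congr (_ + _).
under eq_bigr => j _ do rewrite vlabel_rim_vertex.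
by rewrite /n -size_vertex_head (sum_alt_ext (signed_indicatorN c)).
Qed.

Lemma wheel_H2_cordial_labeling : Hk_cordial_labeling (@wheel_ends n) 2 f.
Proof.
have label_range (h : seq int) x i : all (fun y => 1 <= `|y| <= 2%:Z) h ->
    1 <= `|x| <= 2%:Z -> 1 <= `|alt_ext h x i| <= 2%:Z.
  move=> h_range x_range.
  by apply: (alt_ext_in (P := fun y => 1 <= `|y| <= 2%:Z)); rewrite ?normrN.
split; [|split].
- by case=> i; apply: label_range; case: (b).
- move=> v; case: (unliftP ord0 v) => [j ->|->].
    by rewrite vlabel_rim_vertex; apply: label_range; case: (b).
  by rewrite vlabel_hub; case: (b); rewrite /= !big_cons big_nil.
- move=> i /andP[i_ge1 i_le2]; rewrite edge_imbalance vertex_imbalance.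
  have [->|->] : i = 1%N \/ i = 2%N by lia.
  all: by case: (b); rewrite /= !big_cons !big_nil.
Qed.

End Construction.

Theorem theorem6 (n : nat) : (3 <= n)%N -> wheel_Hk_cordial n 2.
Proof.
move=> /wheel_size_decomp[b [k ->]].
by exists (wheel_labeling (spoke_lab b) (rim_lab b)); exact: wheel_H2_cordial_labeling.
Qed.
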